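(* Let $\mathfrak L$ be a GNN layer of input dimension $p$. Then there is a $\lambda\in\mathbb N_{>0}$ such that for all graphs $G$, all signals $\mathcal x,\mathcal x':V(G)\to\mathbb R^p$, and all vertices $v\in V(G)$, $$\|\tilde{\mathfrak L}(G,\mathcal x)(v)-\tilde{\mathfrak L}(G,\mathcal x')(v)\|_\infty\le\lambda\,\|\mathcal x|_{N[v]}-\mathcal x'|_{N[v]}\|_\infty\max\{\deg(v),1\}\le\lambda\,\|\mathcal x-\mathcal x'\|_\infty|G|.$$
   Context: Graphs are finite, simple, undirected with nonempty vertex set; $N(v)$ is the neighbourhood, $N[v]=N(v)\cup\{v\}$, $\deg(v)=|N(v)|$, $|G|=|V(G)|$. For a signal $\mathcal y$ and $W\subseteq V(G)$, $\|\mathcal y|_W\|_\infty=\max_{w\in W}\|\mathcal y(w)\|_\infty$, and $\|\mathcal y\|_\infty=\|\mathcal y|_{V(G)}\|_\infty$. An FNN has a finite dag skeleton, Lipschitz continuous activation functions $\mathfrak a_v$, real weights and biases; sources are inputs, sinks outputs, a non-input node computes $\mathfrak a_v(b_v+\sum_{uv\in E}w_{uv}\cdot\text{value}(u))$. A GNN layer $\mathfrak L=(\mathrm{msg},\mathrm{agg},\mathrm{comb})$ of input dimension $p$ has $\mathrm{msg}:\mathbb R^{2p}\to\mathbb R^r$, $\mathrm{comb}:\mathbb R^{p+r}\to\mathbb R^q$ computed by FNNs and $\mathrm{agg}$ coordinatewise sum, mean or maximum of finite multisets (value $\mathbf 0$ on the empty multiset); $\tilde{\mathfrak L}(G,\mathcal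 x)(v)=\mathrm{comb}\big(\mathcal x(v),\mathrm{agg}\{\!\{\mathrm{msg}(\mathcal x(v),\mathcal x(w)):w\in N(v)\}\!\}\big)$. *)

From HB Require Import structures.
From mathcomp Require Import all_boot all_order all_algebra.
From mathcomp Require Import reals.
Set Implicit Arguments. Unset Strict Implicit. Unset Printing Implicit Defensive.
Import Order.TTheory GRing.Theory Num.Theory.
Local Open Scope ring_scope.

(* A finite dag skeleton on nodes 'I_fnn_size (acyclicity is expressed by a
   topological labelling: every edge goes from a smaller to a larger node,
   which is w.l.o.g. for finite dags). *)
Record fnn (R : realType) (m k : nat) := FNN {
  fnn_size : nat;
  fnn_edge : rel 'I_fnn_size;
  fnn_weight : 'I_fnn_size -> 'I_fnn_size -> R;
  fnn_bias : 'I_fnn_size -> R;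
  fnn_act : 'I_fnn_size -> R -> R;
  fnn_in : 'I_m -> 'I_fnn_size;
  fnn_out : 'I_k -> 'I_fnn_size }.
Arguments fnn_size {R m k}.
Arguments fnn_edge {R m k}.
Arguments fnn_weight {R m k}.
Arguments fnn_bias {R m k}.
Arguments fnn_act {R m k}.
Arguments fnn_in {R m k}.
Arguments fnn_out {R m k}.

Definition fnn_source R m k (N : fnn R m k) (j : 'I_(fnn_size N)) : bool :=
  [forall i, ~~ fnn_edge N i j].
Definition fnn_sink R m k (N : fnn R m k) (j : 'I_(fnn_size N)) : bool :=
  [forall i, ~~ fnn_edge N j i].

Arguments fnn_source {R m k} N j.
Arguments fnn_sink {R m k} N j.

Definition lipschitz (R : realType) (f : R -> R) : Prop :=
  exists L : R, forall a b, `|f a - f b| <= L * `|a - b|.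

Definition fnn_valid R m k (N : fnn R m k) : Prop :=
  (forall i j, fnn_edge N i j -> (i < j)%N) /\
  injective (fnn_in N) /\
  (forall j, fnn_source N j <-> exists t, fnn_in N t = j) /\
  injective (fnn_out N) /\
  (forall j, fnn_sink N j <-> exists t, fnn_out N t = j) /\
  (forall j, lipschitz (fnn_act N j)).

Definition fnn_step R m k (N : fnn R m k) (x : 'I_m -> R)
  (val : 'I_(fnn_size N) -> R) (j : 'I_(fnn_size N)) : R :=
  if [pick t | fnn_in N t == j] is Some t then x t
  else fnn_act N j (fnn_bias N j +
         \sum_(i | fnn_edge N i j) fnn_weight N i j * val i).

Arguments fnn_step {R m k} N x val j.

(* after fnn_size iterations every node carries its (dag-recursive) value *)
Definition fnn_eval R m k (N : fnn R m k) (x : 'I_m -> R) : 'I_k -> R :=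
  fun o => iter (fnn_size N) (fnn_step N x) (fun _ => 0) (fnn_out N o).

Arguments fnn_eval {R m k} N x o.

Definition vcat (R : realType) a b (x : 'I_a -> R) (y : 'I_b -> R)
  : 'I_(a + b) -> R :=
  fun i => match split i with inl i1 => x i1 | inr i2 => y i2 end.

Definition vnorm (R : realType) n (y : 'I_n -> R) : R :=
  \big[Num.max/0]_(i < n) `|y i|.

Inductive agg_kind := AggSum | AggMean | AggMax.

Definition seq_max (R : realType) (s : seq R) : R :=
  if s is h :: t then foldr Num.max h t else 0.

Definition agg_apply (R : realType) r (a : agg_kind) (s : seq ('I_r -> R))
  : 'I_r -> R :=
  fun i => match a with
  | AggSum => \sum_(y <- s) y i
  | AggMean => (\sum_(y <- s) y i) / (size s)%:R   (* 0 on the empty multiset *)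
  | AggMax => seq_max [seq y i | y <- s]
  end.

Record gnn_layer (R : realType) (p : nat) := GNNLayer {
  gl_r : nat;
  gl_q : nat;
  gl_msg : fnn R (p + p) gl_r;
  gl_agg : agg_kind;
  gl_comb : fnn R (p + gl_r) gl_q }.
Arguments gl_r {R p}.
Arguments gl_q {R p}.
Arguments gl_msg {R p}.
Arguments gl_agg {R p}.
Arguments gl_comb {R p}.

Definition gnn_valid R p (L : gnn_layer R p) : Prop :=
  fnn_valid (gl_msg L) /\ fnn_valid (gl_comb L).

Definition simple_graph (T : finType) (e : rel T) : Prop :=
  symmetric e /\ irreflexive e.

Definition nbhd (T : finType) (e : rel T) (v : T) : {set T} := [set w | e v w].
Definition cnbhd (T : finType) (e : rel T) (v : T) : {set T} := v |: nbhd e v.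
Definition deg (T : finType) (e : rel T) (v : T) : nat := #|nbhd e v|.

Definition layer_apply (R : realType) p (L : gnn_layer R p) (T : finType) (e : rel T)
  (x : T -> 'I_p -> R) (v : T) : 'I_(gl_q L) -> R :=
  fnn_eval (gl_comb L)
    (vcat (x v) (agg_apply (gl_agg L)
       [seq fnn_eval (gl_msg L) (vcat (x v) (x w)) | w <- enum (nbhd e v)])).

Definition sig_norm_on (R : realType) p (T : finType) (x : T -> 'I_p -> R) (W : {set T}) : R :=
  \big[Num.max/0]_(w in W) vnorm (x w).
Definition sig_norm (R : realType) p (T : finType) (x : T -> 'I_p -> R) : R :=
  sig_norm_on x [set: T].

Definition sig_sub (R : realType) p (T : finType) (x x' : T -> 'I_p -> R) : T -> 'I_p -> R :=
  fun w i => x w i - x' w i.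

Arguments layer_apply {R p} L {T} e x v _.
Arguments sig_norm_on {R p T} x W.
Arguments sig_norm {R p T} x.
Arguments sig_sub {R p T} x x' _ _.
Arguments nbhd {T} e v.
Arguments cnbhd {T} e v.
Arguments deg {T} e v.
Arguments vnorm {R n} y.
Arguments gnn_valid {R p} L.
Arguments simple_graph {T} e.

From HB Require Import structures.
From mathcomp Require Import all_boot all_order all_algebra.
From mathcomp Require Import reals.
From mathcomp Require Import lra.
Set Implicit Arguments. Unset Strict Implicit. Unset Printing Implicit Defensive.
Import Order.TTheory GRing.Theory Num.Theory.
Local Open Scope ring_scope.

(* An FNN with Lipschitz activations is Lipschitz for the max-norm of its
   input: by induction on the number of synchronous updates, every node value
   is, and finitely many nodes share one constant.  So the message from each
   neighbour of v moves by at most C_msg * D, where D is the largest change of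
   the signal on N[v]; summation costs a factor deg(v), mean and maximum cost
   nothing, and the combination network multiplies by C_comb.  Any integer
   lambda >= C_comb * (1 + C_msg) works, for every relation e, symmetric or not;
   the second inequality is just N[v] <= V(G) and max(deg(v), 1) <= |G|. *)

Section MaxNorm.
Variable R : realType.

Lemma vnorm_ge0 n (y : 'I_n -> R) : 0 <= vnorm y.
Proof. exact: bigmax_ge_id. Qed.

Lemma ler_vnorm n (y : 'I_n -> R) i : `|y i| <= vnorm y.
Proof. exact: le_bigmax. Qed.

Lemma vnorm_le n (y : 'I_n -> R) c :
  0 <= c -> (forall i, `|y i| <= c) -> vnorm y <= c.
Proof. by move=> c0 yc; apply: bigmax_le. Qed.

Lemma vnorm_vcatB_le a b (x x' : 'I_a -> R) (y y' : 'I_b -> R) c : 0 <= c ->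
  (forall i, `|x i - x' i| <= c) -> (forall i, `|y i - y' i| <= c) ->
  vnorm (fun i => vcat x y i - vcat x' y' i) <= c.
Proof.
by move=> c0 xc yc; apply: vnorm_le => // i; rewrite /vcat; case: split.
Qed.

Lemma sig_norm_on_ge0 p (T : finType) (x : T -> 'I_p -> R) (W : {set T}) :
  0 <= sig_norm_on x W.
Proof. exact: bigmax_ge_id. Qed.

Lemma ler_sig_norm_on p (T : finType) (x : T -> 'I_p -> R) (W : {set T}) w i :
  w \in W -> `|x w i| <= sig_norm_on x W.
Proof.
by move=> wW; apply: le_trans (ler_vnorm (x w) i) _; exact: le_bigmax_cond.
Qed.

Lemma sig_norm_on_le p (T : finType) (x : T -> 'I_p -> R) (W : {set T}) :
  sig_norm_on x W <= sig_norm x.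
Proof.
apply: bigmax_le => [|w _]; first exact: bigmax_ge_id.
by apply: le_bigmax_cond; rewrite in_setT.
Qed.

End MaxNorm.

Section Aggregation.
Variable R : realType.

Lemma dist_max_le (a b a' b' c : R) : `|a - a'| <= c -> `|b - b'| <= c ->
  `|Num.max a b - Num.max a' b'| <= c.
Proof.
rewrite !ler_norml => /andP[? ?] /andP[? ?].
by case: (leP a b); case: (leP a' b') => *; apply/andP; split; lra.
Qed.

Lemma dist_seq_max_le (T : eqType) (r : seq T) (F G : T -> R) c : 0 <= c ->
  {in r, forall w, `|F w - G w| <= c} ->
  `|seq_max (map F r) - seq_max (map G r)| <= c.
Proof.
case: r => [c0 _|a r _]; first by rewrite subrr normr0.
elim: r a => [|b r IH] a FGc /=; first by apply: FGc; rewrite mem_head.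
apply: dist_max_le; first by apply: FGc; rewrite !inE eqxx orbT.
apply: IH => w; rewrite inE => /orP[/eqP-> | wr]; apply: FGc.
  by rewrite mem_head.
by rewrite !inE wr !orbT.
Qed.

Lemma dist_sum_le (T : eqType) (r : seq T) (F G : T -> R) c :
  {in r, forall w, `|F w - G w| <= c} ->
  `|\sum_(w <- r) F w - \sum_(w <- r) G w| <= c * (size r)%:R.
Proof.
move=> FGc; rewrite -sumrB (le_trans (ler_norm_sum _ _ _)) //.
rewrite big_seq (le_trans (ler_sum _ (fun w wr => FGc w wr))) // -big_seq.
by rewrite big_const_seq count_predT -Monoid.iteropE /= mulr_natr.
Qed.

Lemma agg_apply_dist_le (T : eqType) k (a : agg_kind) (r : seq T)
    (F G : T -> 'I_k -> R) c o : 0 <= c ->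
  {in r, forall w, `|F w o - G w o| <= c} ->
  `|agg_apply a (map F r) o - agg_apply a (map G r) o|
    <= c * (maxn (size r) 1)%:R.
Proof.
move=> c0 FGc; have cM : c <= c * (maxn (size r) 1)%:R.
  by rewrite ler_peMr // ler1n leq_maxr.
case: a => /=; rewrite ?size_map ?big_map.
- apply: le_trans (dist_sum_le FGc) _.
  by rewrite ler_wpM2l // ler_nat leq_maxl.
- rewrite -mulrBl normrM normfV normr_nat.
  have [-> | r_gt0] := posnP (size r).
    by rewrite invr0 mulr0 mulr_ge0.
  by rewrite ler_pdivrMr ?ltr0n // (le_trans (dist_sum_le FGc)) // ler_wpM2r.
- by rewrite -!map_comp (le_trans (dist_seq_max_le c0 FGc)).
Qed.

End Aggregation.

Section FNNLipschitz.
Variables (R : realType) (m k : nat) (N : fnn R m k).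
Hypothesis act_lipschitz : forall j, lipschitz (fnn_act N j).

Definition input_lipschitz I (f : ('I_m -> R) -> I -> R) (C : R) : Prop :=
  forall x x' j, `|f x j - f x' j| <= C * vnorm (fun t => x t - x' t).

Lemma lipschitz_const_ge0 (g : R -> R) L :
  (forall a b, `|g a - g b| <= L * `|a - b|) -> 0 <= L.
Proof. by move=> /(_ 1 0); rewrite subr0 normr1 mulr1; apply: le_trans. Qed.

Lemma fnn_step_node_lipschitz (val : ('I_m -> R) -> 'I_(fnn_size N) -> R) C j :
  input_lipschitz val C -> exists c, forall x x',
  `|fnn_step N x (val x) j - fnn_step N x' (val x') j|
    <= c * vnorm (fun t => x t - x' t).
Proof.
move=> val_lip; rewrite /fnn_step; case: pickP => [t _ | _].
  by exists 1 => x x'; rewrite mul1r (ler_vnorm (fun t => x t - x' t)).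
have [Lj act_j] := act_lipschitz j; have Lj0 := lipschitz_const_ge0 act_j.
exists (Lj * \sum_(i | fnn_edge N i j) `|fnn_weight N i j| * C) => x x'.
apply: le_trans (act_j _ _) _; rewrite opprD addrACA subrr add0r -mulrA.
rewrite ler_wpM2l // -sumrB mulr_suml (le_trans (ler_norm_sum _ _ _)) //.
by apply: ler_sum => i _; rewrite -mulrBr normrM -mulrA ler_wpM2l.
Qed.

Lemma fnn_step_lipschitz (val : ('I_m -> R) -> 'I_(fnn_size N) -> R) C :
  input_lipschitz val C -> exists2 c, 0 <= c &
  input_lipschitz (fun x => fnn_step N x (val x)) c.
Proof.
move=> val_lip.
have [c cP] := fin_all_exists (fun j => fnn_step_node_lipschitz j val_lip).
exists (\big[Num.max/0]_j c j) => [|x x' j]; first exact: bigmax_ge_id.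
by apply: le_trans (cP j x x') _; rewrite ler_wpM2r ?vnorm_ge0 ?le_bigmax.
Qed.

Lemma iter_fnn_step_lipschitz n : exists2 C, 0 <= C &
  input_lipschitz (fun x => iter n (fnn_step N x) (fun _ => 0)) C.
Proof.
elim: n => [|n [C _ /fnn_step_lipschitz [c c0 step_lip]]]; last by exists c.
by exists 0 => // x x' j; rewrite subrr normr0 mul0r.
Qed.

Lemma fnn_eval_lipschitz : exists2 C, 0 <= C & input_lipschitz (fnn_eval N) C.
Proof.
have [C C0 iter_lip] := iter_fnn_step_lipschitz (fnn_size N).
by exists C => // x x' o; apply: iter_lip.
Qed.

End FNNLipschitz.

Lemma deg_max1_le_card (T : finType) (e : rel T) v : (maxn (deg e v) 1 <= #|T|)%N.
Proof. by rewrite geq_max max_card; apply/card_gt0P; exists v. Qed.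

Lemma layer_apply_lipschitz (R : realType) p (L : gnn_layer R p) : gnn_valid L ->
  exists K : R, forall (T : finType) (e : rel T) (x x' : T -> 'I_p -> R) v,
    vnorm (fun i => layer_apply L e x v i - layer_apply L e x' v i)
      <= K * sig_norm_on (sig_sub x x') (cnbhd e v) * (maxn (deg e v) 1)%:R.
Proof.
move=> [[_ [_ [_ [_ [_ msg_act]]]]] [_ [_ [_ [_ [_ comb_act]]]]]].
have [Cm Cm0 msg_lip] := fnn_eval_lipschitz msg_act.
have [Cc Cc0 comb_lip] := fnn_eval_lipschitz comb_act.
exists (Cc * (1 + Cm)) => T e x x' v.
set D := sig_norm_on _ _; set M := (maxn _ 1)%:R.
have D0 : 0 <= D := sig_norm_on_ge0 _ _.
have M1 : 1 <= M by rewrite ler1n leq_maxr.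
have x_dist w i : w \in cnbhd e v -> `|x w i - x' w i| <= D.
  exact: (ler_sig_norm_on (sig_sub x x')).
have msg_dist o w : w \in enum (nbhd e v) ->
    `|fnn_eval (gl_msg L) (vcat (x v) (x w)) o
      - fnn_eval (gl_msg L) (vcat (x' v) (x' w)) o| <= Cm * D.
  rewrite mem_enum => wN; apply: le_trans (msg_lip _ _ o) _; rewrite ler_wpM2l //.
  by apply: vnorm_vcatB_le => // i; apply: x_dist; rewrite ?setU11 ?setU1r.
have DM0 : 0 <= D * M by rewrite mulr_ge0 // (le_trans ler01).
have D_DM : D <= D * M by rewrite ler_peMr.
have input_bound0 : 0 <= (1 + Cm) * (D * M) by rewrite mulr_ge0 ?addr_ge0.
rewrite -!mulrA; apply: vnorm_le => [|o]; first exact: mulr_ge0.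
apply: le_trans (comb_lip _ _ o) _; rewrite ler_wpM2l //.
apply: vnorm_vcatB_le => // [i|o'].
  by apply: le_trans (x_dist _ _ (setU11 _ _)) _; nra.
apply: le_trans.
  exact: (agg_apply_dist_le _ (mulr_ge0 Cm0 D0) (msg_dist o')).
by rewrite -cardE -/(deg e v) -/M -mulrA; nra.
Qed.

Theorem lemma4p3 (R : realType) (p : nat) (L : gnn_layer R p) :
  gnn_valid L ->
  exists lam : nat, (0 < lam)%N /\
    forall (T : finType) (e : rel T), simple_graph e ->
    forall (x x' : T -> 'I_p -> R) (v : T),
      vnorm (fun i => layer_apply L e x v i - layer_apply L e x' v i)
        <= lam%:R * sig_norm_on (sig_sub x x') (cnbhd e v) * (maxn (deg e v) 1)%:R
      /\ lam%:R * sig_norm_on (sig_sub x x') (cnbhd e v) * (maxn (deg e v) 1)%:R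
        <= lam%:R * sig_norm (sig_sub x x') * #|T|%:R.
Proof.
move=> /layer_apply_lipschitz [K layer_lip].
exists (Num.truncn K).+1; split => // T e _ x x' v.
have D0 := sig_norm_on_ge0 (sig_sub x x') (cnbhd e v).
split.
  apply: le_trans (layer_lip T e x x' v) _.
  by rewrite ler_wpM2r // ler_wpM2r // ltW // truncnS_gt.
rewrite -!mulrA ler_wpM2l // ler_pM // ?sig_norm_on_le //.
by rewrite ler_nat deg_max1_le_card.
Qed.
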